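(* Let $G = \bigcap_{i \in \mathcal{I}} G_i$ be a nonempty domain in $\mathbb{R}^d$, where $\mathcal{I}=\{1,\dots,\mathbf{I}\}$ is a nonempty finite index set and for each $i \in \mathcal{I}$, $G_i$ is a nonempty domain, $G_i \neq \mathbb{R}^d$, whose boundary $\partial G_i$ is $C^1$, and let $n^i(\cdot)$ denote the unit normal vector field on $\partial G_i$ pointing into $G_i$. Let $\gamma^i:\mathbb{R}^d\to\mathbb{R}^d$, $i\in\mathcal{I}$, be vector fields, and for $x\in\mathbb{R}^d$ let $\mathcal{I}(x)=\{i\in\mathcal{I}: x\in\partial G_i\}$. Then there is a constant $a \in (0,1)$ and a vector valued function $b: \partial G \to \mathbb{R}_+^{\mathbf{I}}$ such that for each $x \in \partial G$, $\sum_{i \in \mathcal{I}(x)} b_i(x) = 1$ and for each $i \in \mathcal{I}(x)$, $$b_i(x)\langle n^i(x), \gamma^i(x)\rangle \ge a + \sum_{j \in \mathcal{I}(x)\setminus\{i\}} b_j(x)\,|\langle n^j(x), \gamma^i(x)\rangle|,$$ if and only if there is a constant $a \in (0,1)$ and a vector valued function $c: \partial G \to \mathbb{R}_+^{\mathbf{I}}$ such that for each $x \in \partial G$, $\sum_{i \in \mathcal{I}(x)} c_i(x) = 1$ and for each $i \in \mathcal{I}(x)$, $$c_i(x)\langle \gamma^i(x), n^i(x)\rangle \ge a + \sum_{j \in \mathcal{I}(x)\setminus\{i\}} c_j(x)\,|\langle \gamma^j(x), n^i(x)\rangle|.$$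
   Context: $\langle\cdot,\cdot\rangle$ is the Euclidean inner product on $\mathbb{R}^d$, $\mathbb{R}_+^{\mathbf{I}}$ is the nonnegative orthant, and $\partial G$ is the boundary of $G$. *)

From HB Require Import structures.
From mathcomp Require Import all_boot all_order all_algebra.
From mathcomp Require Import all_classical all_reals all_analysis.
Set Implicit Arguments. Unset Strict Implicit. Unset Printing Implicit Defensive.
Import Order.TTheory GRing.Theory Num.Theory numFieldNormedType.Exports.
Local Open Scope classical_set_scope.
Local Open Scope ring_scope.

Section Defs.
Variables (R : realType) (d : nat).
Notation V := 'rV[R]_d.

Definition dotp (u v : V) : R := \sum_(k < d) u ord0 k * v ord0 k.
Definition enorm (u : V) : R := Num.sqrt (dotp u u).

Definition bdry (A : set V) : set V := closure A `\` interior A.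

Definition domain (A : set V) : Prop := [/\ A !=set0, open A & connected A].

Definition partial (f : V -> R) (k : 'I_d) (x : V) : R :=
  'D_(delta_mx ord0 k) f x.
Definition grad (f : V -> R) (x : V) : V := \row_k partial f k x.

Definition C1_on (U : set V) (f : V -> R) : Prop :=
  (forall y, U y -> differentiable f y) /\
  (forall k y, U y -> {for y, continuous (partial f k)}).

Definition local_defining (A : set V) (x : V) (U : set V) (phi : V -> R) : Prop :=
  [/\ open U, U x, C1_on U phi, grad phi x != 0 &
      forall y, U y -> (A y <-> 0 < phi y)].

Definition C1_boundary (A : set V) : Prop :=
  forall x, bdry A x -> exists U phi, local_defining A x U phi.

Definition inward_unit_normal (A : set V) (n : V -> V) : Prop :=
  forall x, bdry A x -> exists U phi, local_defining A x U phi /\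
    n x = (enorm (grad phi x))^-1 *: grad phi x.

Definition active (I : nat) (G : 'I_I -> set V) (x : V) (i : 'I_I) : bool :=
  `[< bdry (G i) x >].

Definition bigG (I : nat) (G : 'I_I -> set V) : set V := \bigcap_(i in setT) G i.

End Defs.

From HB Require Import structures.
From mathcomp Require Import all_boot all_order all_algebra.
From mathcomp Require Import all_classical all_reals all_analysis.
From mathcomp Require Import ring lra.
Set Implicit Arguments. Unset Strict Implicit. Unset Printing Implicit Defensive.
Import Order.TTheory GRing.Theory Num.Theory numFieldNormedType.Exports.
Local Open Scope ring_scope.

(* At each boundary point the condition on b says that w = b satisfies
   w^T A >= a columnwise for the Z-matrix A with diagonal <n^i, gamma^i> and
   off-diagonal entries -|<n^j, gamma^i>|; the condition on c says A c >= a
   rowwise.  A Z-matrix admitting a nonnegative w with w^T A > 0 is a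
   nonsingular M-matrix, so Gaussian elimination (which keeps the Schur
   complement a Z-matrix with the same property) solves A c0 = 1 with c0 >= 0;
   normalising, c = c0 / sum c0 satisfies A c = 1 / sum c0 >= a, because
   a * sum c0 <= w^T A c0 = sum w = 1.  The converse is the same statement for
   the transposed matrix. *)

Section Zmatrix.
Variables (T : finType) (R : realFieldType).
Implicit Types (S : {set T}) (A : T -> T -> R) (b c v : T -> R).

Definition Zmatrix_on S A :=
  forall i j, i \in S -> j \in S -> i != j -> A i j <= 0.

Definition schur A p i j := A i j - A i p * A p j / A p p.

Lemma sum_schur_l (D : {pred T}) A p b j :
  \sum_(i in D) b i * schur A p i j =
  \sum_(i in D) b i * A i j - (\sum_(i in D) b i * A i p) * A p j / A p p.
Proof. by rewrite !mulr_suml -sumrB; apply: eq_bigr => i _; rewrite /schur; ring. Qed.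

Lemma sum_schur_r (D : {pred T}) A p i c :
  \sum_(j in D) schur A p i j * c j =
  \sum_(j in D) A i j * c j - A i p / A p p * \sum_(j in D) A p j * c j.
Proof. by rewrite mulr_sumr -sumrB; apply: eq_bigr => j _; rewrite /schur; ring. Qed.

Section Pivot.
Variables (S : {set T}) (A : T -> T -> R) (p : T).
Hypotheses (pS : p \in S) (ZA : Zmatrix_on S A).

Lemma Zmatrix_pivot_gt0 b :
  {in S, forall i, 0 <= b i} -> 0 < \sum_(i in S) b i * A i p -> 0 < A p p.
Proof.
move=> b_ge0; rewrite (big_setD1 p pS) /=.
have : \sum_(i in S :\ p) b i * A i p <= 0.
  apply: sumr_le0 => i; rewrite in_setD1 => /andP[ip iS].
  by rewrite mulr_ge0_le0 ?b_ge0 ?ZA.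
have := b_ge0 p pS; nra.
Qed.

Hypothesis App_gt0 : 0 < A p p.

Lemma schur_Zmatrix : Zmatrix_on (S :\ p) (schur A p).
Proof.
move=> i j; rewrite !in_setD1 => /andP[ip iS] /andP[jp jS] ij.
have : 0 <= A i p * A p j / A p p.
  by apply: divr_ge0 (ltW App_gt0); apply: mulr_le0; apply: ZA; rewrite // eq_sym.
by have := ZA iS jS ij; rewrite /schur; lra.
Qed.

Lemma schur_col_gt0 b :
  {in S, forall j, 0 < \sum_(i in S) b i * A i j} ->
  {in S :\ p, forall j, 0 < \sum_(i in S :\ p) b i * schur A p i j}.
Proof.
move=> col_gt0 j; rewrite in_setD1 => /andP[jp jS]; rewrite sum_schur_l.
have := col_gt0 p pS; have := col_gt0 j jS; rewrite !(big_setD1 p pS) /=.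
set Xp := \sum_(i in S :\ p) b i * A i p; set Xj := \sum_(i in S :\ p) _.
move=> Xj_gt0 Xp_gt0.
have t_ge0 : 0 <= - (A p j / A p p).
  by rewrite oppr_ge0 pmulr_lle0 ?invr_gt0 ?ZA // eq_sym.
have := mulr_ge0 t_ge0 (ltW Xp_gt0).
have -> : - (A p j / A p p) * (b p * A p p + Xp) = - (Xp * A p j / A p p) - b p * A p j.
  by field; rewrite gt_eqF.
lra.
Qed.

Definition back_subst v c j :=
  if j == p then (v p - \sum_(k in S :\ p) A p k * c k) / A p p else c j.

Lemma back_subst_solves v c :
  {in S :\ p, forall i,
     \sum_(j in S :\ p) schur A p i j * c j = v i - A i p * v p / A p p} ->
  {in S, forall i, \sum_(j in S) A i j * back_subst v c j = v i}.
Proof.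
move=> sol i iS; rewrite (big_setD1 p pS) /= /back_subst eqxx.
rewrite [X in _ + X](eq_bigr (fun j => A i j * c j)) => [|j]; last first.
  by rewrite in_setD1 => /andP[/negbTE ->].
have Ann : A p p != 0 by rewrite gt_eqF.
have [->|ip] := eqVneq i p; first by field.
have := sol i; rewrite in_setD1 ip iS sum_schur_r => /(_ isT) e.
have -> : \sum_(j in S :\ p) A i j * c j =
  v i - A i p * v p / A p p + A i p / A p p * \sum_(j in S :\ p) A p j * c j.
  by rewrite -e; ring.
by field.
Qed.

End Pivot.

Lemma Zmatrix_solve_nonneg S A b v :
  Zmatrix_on S A -> {in S, forall i, 0 <= b i} ->
  {in S, forall j, 0 < \sum_(i in S) b i * A i j} ->
  {in S, forall i, 0 <= v i} ->
  exists2 c, {in S, forall j, 0 <= c j} &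
             {in S, forall i, \sum_(j in S) A i j * c j = v i}.
Proof.
move Hk : #|S| => k; elim: k S A v Hk => [|k IH] S A v cardS ZA b_ge0 col_gt0 v_ge0.
  by exists (fun=> 0) => i; rewrite (cards0_eq cardS) inE.
have [p pS] : exists p, p \in S by apply/set0Pn; rewrite -card_gt0 cardS.
have App_gt0 := Zmatrix_pivot_gt0 pS ZA b_ge0 (col_gt0 p pS).
pose v' i := v i - A i p * v p / A p p.
have v'_ge0 : {in S :\ p, forall i, 0 <= v' i}.
  move=> i; rewrite in_setD1 => /andP[ip iS].
  have : A i p * v p / A p p <= 0.
    by rewrite pmulr_lle0 ?invr_gt0 // mulr_le0_ge0 ?ZA ?v_ge0.
  by have := v_ge0 i iS; rewrite /v'; lra.
have cardS' : #|S :\ p| = k by move: cardS; rewrite (cardsD1 p S) pS => -[].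
have b_ge0' : {in S :\ p, forall i, 0 <= b i}.
  by move=> i; rewrite in_setD1 => /andP[_ /b_ge0].
have [c c_ge0 c_sol] := IH _ _ v' cardS' (schur_Zmatrix pS ZA App_gt0) b_ge0'
  (schur_col_gt0 pS ZA App_gt0 col_gt0) v'_ge0.
exists (back_subst S A p v c); last exact: back_subst_solves.
move=> j jS; rewrite /back_subst; case: eqVneq => [_|jp]; last first.
  by apply: c_ge0; rewrite in_setD1 jp.
apply: divr_ge0 (ltW App_gt0); rewrite subr_ge0 (le_trans _ (v_ge0 p pS)) //.
apply: sumr_le0 => i; rewrite in_setD1 => /andP[ip iS].
by rewrite mulr_le0_ge0 ?ZA ?c_ge0 1?eq_sym // in_setD1 ip.
Qed.

Lemma Zmatrix_normalized_solution S A a b :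
  0 < a -> Zmatrix_on S A -> {in S, forall i, 0 <= b i} ->
  \sum_(i in S) b i = 1 ->
  {in S, forall j, a <= \sum_(i in S) b i * A i j} ->
  exists c : T -> R, [/\ forall j, 0 <= c j, \sum_(i in S) c i = 1 &
    {in S, forall i, a <= \sum_(j in S) A i j * c j}].
Proof.
move=> a_gt0 ZA b_ge0 sum_b col_ge.
have [c0 c0_ge0 c0_sol] := Zmatrix_solve_nonneg (v := fun=> 1) ZA b_ge0
  (fun j jS => lt_le_trans a_gt0 (col_ge j jS)) (fun _ _ => ler01).
have sum_c0_col : \sum_(j in S) c0 j * \sum_(i in S) b i * A i j = 1.
  rewrite -sum_b; under [RHS]eq_bigr => i iS do rewrite -[b i]mulr1 -(c0_sol i iS) mulr_sumr.
  rewrite exchange_big /=; apply: eq_bigr => j _; rewrite mulr_sumr.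
  by apply: eq_bigr => i _; ring.
set s := \sum_(j in S) c0 j.
have as_le1 : a * s <= 1.
  rewrite -sum_c0_col /s mulr_sumr; apply: ler_sum => j jS.
  by rewrite mulrC ler_wpM2l ?c0_ge0 ?col_ge.
have s_gt0 : 0 < s.
  rewrite lt_def sumr_ge0 ?andbT //; apply/eqP => /psumr_eq0P s0.
  move: sum_c0_col; rewrite big1 => [/eqP|j jS]; first by rewrite eq_sym oner_eq0.
  by rewrite s0 ?mul0r.
exists (fun i => if i \in S then c0 i / s else 0); split.
- by move=> j; case: ifP => // jS; rewrite divr_ge0 ?c0_ge0 ?ltW.
- by rewrite -(divff (lt0r_neq0 s_gt0)) /s mulr_suml; apply: eq_bigr => i ->.
- move=> i iS; rewrite (eq_bigr (fun j => A i j * c0 j / s)) => [|j ->]; last first.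
    by rewrite mulrA.
  by rewrite -mulr_suml c0_sol // ler_pdivlMr.
Qed.

End Zmatrix.

Section Dominance.
Variables (R : realFieldType) (T : finType).

Definition dominant_weights (S : pred T) (K : T -> T -> R) (a : R) (w : T -> R) :=
  (forall i, 0 <= w i) /\ (\sum_(i | S i) w i = 1) /\
  (forall i, S i -> w i * K i i >= a + \sum_(j | S j && (j != i)) w j * `|K j i|).

Lemma big_split_active (S : pred T) i (F : T -> R) : S i ->
  \sum_(j in [set j | S j]) F j = F i + \sum_(j | S j && (j != i)) F j.
Proof.
move=> Si; rewrite (big_setD1 i) ?inE //; congr (_ + _).
by apply: eq_bigl => j; rewrite !inE andbC.
Qed.

Lemma dominant_weights_transpose S K a w : 0 < a ->
  dominant_weights S K a w -> exists c, dominant_weights S (fun i j => K j i) a c.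
Proof.
move=> a_gt0 [w_ge0 [sum_w dom_w]].
pose A i j := if i == j then K j j else - `|K i j|.
have [c [c_ge0 sum_c row_ge]] : exists c, [/\ forall j, 0 <= c j,
    \sum_(i in [set i | S i]) c i = 1 &
    {in [set i | S i], forall i, a <= \sum_(j in [set i | S i]) A i j * c j}].
  apply: Zmatrix_normalized_solution => //.
  - by move=> i j _ _ ij; rewrite /A (negbTE ij) oppr_le0.
  - by rewrite -sum_w; apply: eq_bigl => i; rewrite inE.
  - move=> j; rewrite inE => Sj; rewrite (big_split_active _ Sj) /A eqxx.
    rewrite (eq_bigr (fun i => - (w i * `|K i j|))) ?sumrN; last first.
      by move=> i /andP[_ /negbTE ->]; rewrite mulrN.
    by have := dom_w j Sj; lra.
exists c; split=> //; split=> [|i Si].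
  by rewrite -sum_c; apply: eq_bigl => i; rewrite inE.
have := row_ge i; rewrite inE (big_split_active _ Si) /A eqxx => /(_ Si).
rewrite (eq_bigr (fun j => - (c j * `|K i j|))) ?sumrN; last first.
  by move=> j /andP[_ ji]; rewrite eq_sym (negbTE ji) mulNr mulrC.
by rewrite mulrC; lra.
Qed.

Definition uniformly_dominant (X : Type) (bd : X -> Prop) (S : X -> pred T)
    (K : X -> T -> T -> R) :=
  exists (a : R) (w : X -> T -> R),
    [/\ 0 < a, a < 1 & forall x, bd x -> dominant_weights (S x) (K x) a (w x)].

Lemma uniformly_dominant_transpose X bd S K :
  @uniformly_dominant X bd S K ->
  uniformly_dominant bd S (fun x i j => K x j i).
Proof.
move=> [a [w [a_gt0 a_lt1 dom]]]; exists a.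
have /choice[c Hc] : forall x, exists c, bd x ->
    dominant_weights (S x) (fun i j => K x j i) a c.
  move=> x; have [bx|nbx] := pselect (bd x); last by exists (fun=> 0).
  by have [c Hc] := dominant_weights_transpose a_gt0 (dom x bx); exists c.
by exists c; split.
Qed.

End Dominance.

Lemma dotpC (R : realType) (d : nat) (u v : 'rV[R]_d) : dotp u v = dotp v u.
Proof. by apply: eq_bigr => k _; rewrite mulrC. Qed.

Local Open Scope classical_set_scope.

Theorem lemma3p1 (R : realType) (d I : nat) (G : 'I_I -> set 'rV[R]_d)
    (n gamma : 'I_I -> 'rV[R]_d -> 'rV[R]_d) :
  (0 < I)%N ->
  domain (bigG G) ->
  (forall i, domain (G i)) ->
  (forall i, G i <> setT) ->
  (forall i, C1_boundary (G i)) ->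
  (forall i, inward_unit_normal (G i) (n i)) ->
  (exists (a : R) (b : 'rV[R]_d -> 'I_I -> R),
     [/\ 0 < a, a < 1 &
     forall x, bdry (bigG G) x ->
       (forall i, 0 <= b x i) /\
       (\sum_(i | active G x i) b x i = 1) /\
       (forall i, active G x i ->
          b x i * dotp (n i x) (gamma i x) >=
          a + \sum_(j | active G x j && (j != i))
                b x j * `|dotp (n j x) (gamma i x)|)])
  <->
  (exists (a : R) (c : 'rV[R]_d -> 'I_I -> R),
     [/\ 0 < a, a < 1 &
     forall x, bdry (bigG G) x ->
       (forall i, 0 <= c x i) /\
       (\sum_(i | active G x i) c x i = 1) /\
       (forall i, active G x i ->
          c x i * dotp (gamma i x) (n i x) >=
          a + \sum_(j | active G x j && (j != i))
                c x j * `|dotp (gamma j x) (n i x)|)]).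
Proof.
move=> _ _ _ _ _ _.
pose K x j i := dotp (n j x) (gamma i x).
change (uniformly_dominant (bdry (bigG G)) (active G) K <->
        uniformly_dominant (bdry (bigG G)) (active G)
          (fun x j i => dotp (gamma j x) (n i x))).
have -> : (fun x j i => dotp (gamma j x) (n i x)) = (fun x j i => K x i j).
  by apply/funext => x; apply/funext => j; apply/funext => i; rewrite dotpC.
by split=> /uniformly_dominant_transpose.
Qed.
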